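(* There exists a constant $C$ (independent of $N$, $m$, $n$) such that for the discrete reproduction–exchange Markov chain $(x^n)$ described in the context and any integers $0\le m<n$, $$\mathbb{E}\big(|x^n-x^m|^4\big)\le C\frac{|n-m|^2}{N^2},$$ where $|\cdot|$ is the Euclidean norm on $\mathbb{R}^2$.
   Context: Two patches have hosting capacities $N_1=N$ and $N_2=dN$, with $d=N_2/N_1\in(0,1]$ fixed; $\kappa>0$ fixed and $\kappa/N\le 1$. Let $M=\begin{pmatrix} d & -d\\ -1 & 1\end{pmatrix}$ and $A=\mathrm{Id}-\frac{\kappa}{N}M$. For a function $g$ on $\mathcal D=[0,1]^2$ define $$B_N(g)(x)=\sum_{j_1=0}^{N_1}\sum_{j_2=0}^{N_2}\binom{N_1}{j_1}\binom{N_2}{j_2}x_1^{j_1}(1-x_1)^{N_1-j_1}x_2^{j_2}(1-x_2)^{N_2-j_2}\,g\!\left(\tfrac{j_1}{N_1},\tfrac{j_2}{N_2}\right).$$ $(x^n)_{n\ge0}$ is the Markov chain in $\mathcal D$ with transition kernel $\mathbb{E}(f(x^{n+1})\mid x^n=x)=B_N(f\circ A)(x)$ for all functions $f$ on $\mathcal D$. *)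

From mathcomp Require Import all_boot all_order all_algebra.
From mathcomp Require Import reals.
Set Implicit Arguments. Unset Strict Implicit. Unset Printing Implicit Defensive.
Import Order.TTheory GRing.Theory Num.Theory.
Local Open Scope ring_scope.

Section Defs.
Variable R : realType.

(* The linear map A = Id - (kappa/N1) M, M = [[d, -d], [-1, 1]], d = N2/N1. *)
Definition Amap (N1 N2 : nat) (kappa : R) (x : R * R) : R * R :=
  let d := N2%:R / N1%:R in
  let h := kappa / N1%:R in
  (x.1 - h * (d * x.1 - d * x.2), x.2 - h * (- x.1 + x.2)).

Definition bernstein2 (N1 N2 : nat) (g : R * R -> R) (x : R * R) : R :=
  \sum_(j1 < N1.+1) \sum_(j2 < N2.+1)
    ('C(N1, j1)%:R * 'C(N2, j2)%:R
     * x.1 ^+ j1 * (1 - x.1) ^+ (N1 - j1)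
     * x.2 ^+ j2 * (1 - x.2) ^+ (N2 - j2))
    * g ((j1%:R / N1%:R), (j2%:R / N2%:R)).

(* Transition operator of the chain: (P f)(x) = E(f(x^{n+1}) | x^n = x). *)
Definition transition (N1 N2 : nat) (kappa : R) (f : R * R -> R) : R * R -> R :=
  bernstein2 N1 N2 (fun y => f (Amap N1 N2 kappa y)).

Definition transition_iter (N1 N2 : nat) (kappa : R) (k : nat)
  (f : R * R -> R) : R * R -> R :=
  iter k (transition N1 N2 kappa) f.

Definition eucl (x : R * R) : R := Num.sqrt (x.1 ^+ 2 + x.2 ^+ 2).

Definition in_D (x : R * R) : Prop := 0 <= x.1 <= 1 /\ 0 <= x.2 <= 1.

(* E_{x0}( |x^n - x^m|^4 ) for the chain started at x^0 = x0, m <= n,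
   computed by the Markov property:
   E_{x0}[ g(x^m, x^n) ] = P^m ( y |-> P^(n-m) (z |-> g(y,z)) (y) ) (x0). *)
Definition fourth_moment_incr (N1 N2 : nat) (kappa : R) (m n : nat)
  (x0 : R * R) : R :=
  transition_iter N1 N2 kappa m
    (fun y => transition_iter N1 N2 kappa (n - m)
                (fun z => eucl (z.1 - y.1, z.2 - y.2) ^+ 4) y) x0.

End Defs.

(* One step of the chain samples the deterministic map A at a Bernstein (product binomial)
   point, and A moves points of D by at most h = kappa/N1 in each coordinate.  The central
   moments of the binomial law (mean 0, variance N x (1-x), fourth moment O(N^2)) then give,
   for q_y = |. - y|^2, drift bounds P q_y <= q_y + gamma and P q_y^2 <= q_y^2 + alpha q_y + beta
   on D with alpha, gamma = O(1/N1) and beta = O(1/N1^2).  Iterating from the point y itself,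
   where q_y vanishes, gives P^k q_y^2 (y) <= (alpha gamma + beta) k^2 = O(k^2 / N1^2), and the
   Markov property at time m turns this into the bound on E|x^n - x^m|^4. *)

From mathcomp Require Import all_boot all_order all_algebra.
From mathcomp Require Import reals.
From mathcomp Require Import ring lra.
Import Order.TTheory GRing.Theory Num.Theory.
Local Open Scope ring_scope.
Set Implicit Arguments. Unset Strict Implicit. Unset Printing Implicit Defensive.

Section BinomialExpectation.
Variable R : realType.
Implicit Types (x c : R) (g : nat -> R).

Definition bernstein_basis N x j : R := 'C(N, j)%:R * x ^+ j * (1 - x) ^+ (N - j).

Definition binom_expect N x g := \sum_(j < N.+1) bernstein_basis N x j * g j.

Lemma eq_binom_expect N x g1 g2 : (forall j, (j <= N)%N -> g1 j = g2 j) ->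
  binom_expect N x g1 = binom_expect N x g2.
Proof. by move=> eq_g; apply: eq_bigr => j _; rewrite eq_g // -ltnS. Qed.

Lemma binom_expectD N x g1 g2 :
  binom_expect N x (fun j => g1 j + g2 j) = binom_expect N x g1 + binom_expect N x g2.
Proof. by rewrite -big_split; apply: eq_bigr => j _; rewrite mulrDr. Qed.

Lemma binom_expectZ N x c g :
  binom_expect N x (fun j => c * g j) = c * binom_expect N x g.
Proof. by rewrite mulr_sumr; apply: eq_bigr => j _; rewrite mulrCA. Qed.

Lemma binom_expect1 N x : binom_expect N x (fun _ => 1) = 1.
Proof.
transitivity ((1 - x + x) ^+ N); last by rewrite subrK expr1n.
rewrite exprDn; apply: eq_bigr => j _.
by rewrite /bernstein_basis -mulr_natl mulr1; ring.
Qed.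

Lemma binom_expect_cst N x c : binom_expect N x (fun _ => c) = c.
Proof. by rewrite -[c]mulr1 binom_expectZ binom_expect1. Qed.

Lemma bernstein_basis_ge0 N x j : 0 <= x <= 1 -> 0 <= bernstein_basis N x j.
Proof.
by case/andP=> x_ge0 x_le1; rewrite !mulr_ge0 ?exprn_ge0 ?subr_ge0.
Qed.

Lemma ler_binom_expect N x g1 g2 : 0 <= x <= 1 ->
  (forall j, (j <= N)%N -> g1 j <= g2 j) -> binom_expect N x g1 <= binom_expect N x g2.
Proof.
move=> x01 le_g; apply: ler_sum => j _.
by rewrite ler_wpM2l ?bernstein_basis_ge0 // le_g // -ltnS.
Qed.

Lemma bernstein_basisS N x j :
  bernstein_basis N.+1 x j.+1 = (1 - x) * bernstein_basis N x j.+1 + x * bernstein_basis N x j.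
Proof.
rewrite /bernstein_basis binS natrD subSS.
have [lt_jN | le_Nj] := ltnP j N; last by rewrite bin_small ?ltnS // exprS; ring.
by rewrite -(subnSK lt_jN) !exprS; ring.
Qed.

Lemma binom_expectS N x g :
  binom_expect N.+1 x g = (1 - x) * binom_expect N x g + x * binom_expect N x (fun j => g j.+1).
Proof.
rewrite /binom_expect big_ord_recl [in RHS]big_ord_recl.
under eq_bigr do rewrite lift0 bernstein_basisS.
under [in RHS]eq_bigr do rewrite lift0.
have -> : \sum_(i < N.+1) ((1 - x) * bernstein_basis N x i.+1 + x * bernstein_basis N x i) * g i.+1
    = (1 - x) * \sum_(i < N.+1) bernstein_basis N x i.+1 * g i.+1
      + x * \sum_(i < N.+1) bernstein_basis N x i * g i.+1.
  by rewrite !mulr_sumr -big_split; apply: eq_bigr => i _ /=; ring.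
rewrite big_ord_recr /= {3}/bernstein_basis bin_small // !mul0r addr0.
have -> : bernstein_basis N.+1 x 0 = (1 - x) * bernstein_basis N x 0.
  by rewrite /bernstein_basis !bin0 !subn0 exprS; ring.
ring.
Qed.

Definition binom_cmoment N x k := binom_expect N x (fun j => (j%:R - N%:R * x) ^+ k).

Lemma binom_expect_shift_pow N x c k :
  binom_expect N x (fun j => (j%:R - N%:R * x + c) ^+ k)
  = \sum_(i < k.+1) 'C(k, i)%:R * c ^+ (k - i) * binom_cmoment N x i.
Proof.
rewrite /binom_expect; under eq_bigr do rewrite addrC exprDn mulr_sumr.
rewrite exchange_big; apply: eq_bigr => i _; rewrite mulr_sumr.
by apply: eq_bigr => j _; rewrite -mulr_natl; ring.
Qed.

Lemma binom_cmomentS N x k : binom_cmoment N.+1 x k =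
  \sum_(i < k.+1) 'C(k, i)%:R * ((1 - x) * (- x) ^+ (k - i) + x * (1 - x) ^+ (k - i))
                   * binom_cmoment N x i.
Proof.
transitivity ((1 - x) * binom_expect N x (fun j => (j%:R - N%:R * x + - x) ^+ k)
              + x * binom_expect N x (fun j => (j%:R - N%:R * x + (1 - x)) ^+ k)).
  rewrite /binom_cmoment binom_expectS; congr (_ * _ + _ * _).
    by apply: eq_binom_expect => j _; rewrite -natr1; congr (_ ^+ _); ring.
  by apply: eq_binom_expect => j _; rewrite -!natr1; congr (_ ^+ _); ring.
rewrite !binom_expect_shift_pow !mulr_sumr -big_split; apply: eq_bigr => i _ /=; ring.
Qed.

Lemma binom_cmoment0 N x : binom_cmoment N x 0 = 1.
Proof. exact: binom_expect1. Qed.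

Lemma binom_cmoment0n x k : binom_cmoment 0 x k.+1 = 0.
Proof. by rewrite /binom_cmoment /binom_expect big_ord1 mul0r subr0 expr0n mulr0. Qed.

Lemma binom_cmoment1 N x : binom_cmoment N x 1 = 0.
Proof.
elim: N => [|N IH]; first by rewrite binom_cmoment0n; ring.
rewrite binom_cmomentS !big_ord_recr big_ord0 /= !binS !bin0 !bin0n /=.
by rewrite IH binom_cmoment0; ring.
Qed.

Lemma binom_cmoment2 N x : binom_cmoment N x 2 = N%:R * (x * (1 - x)).
Proof.
elim: N => [|N IH]; first by rewrite binom_cmoment0n; ring.
rewrite binom_cmomentS !big_ord_recr big_ord0 /= !binS !bin0 !bin0n /=.
by rewrite IH binom_cmoment0 binom_cmoment1 -(natr1 N); ring.
Qed.

Lemma binom_cmoment3 N x : binom_cmoment N x 3 = N%:R * (x * (1 - x)) * (1 - 2 * x).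
Proof.
elim: N => [|N IH]; first by rewrite binom_cmoment0n; ring.
rewrite binom_cmomentS !big_ord_recr big_ord0 /= !binS !bin0 !bin0n /=.
by rewrite IH binom_cmoment0 binom_cmoment1 binom_cmoment2 -(natr1 N); ring.
Qed.

Lemma binom_cmoment4 N x : binom_cmoment N x 4 =
  3 * N%:R ^+ 2 * (x * (1 - x)) ^+ 2 + N%:R * (x * (1 - x)) * (1 - 6 * (x * (1 - x))).
Proof.
elim: N => [|N IH]; first by rewrite binom_cmoment0n; ring.
rewrite binom_cmomentS !big_ord_recr big_ord0 /= !binS !bin0 !bin0n /=.
by rewrite IH binom_cmoment0 binom_cmoment1 binom_cmoment2 binom_cmoment3 -(natr1 N); ring.
Qed.

Definition centered_quartic (a b c e x t : R) :=
  a + b * (t - x) + c * (t - x) ^+ 2 + e * (t - x) ^+ 4.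

Lemma binom_expect_quartic_le N x a b c e : (0 < N)%N -> 0 <= x <= 1 -> 0 <= c -> 0 <= e ->
  binom_expect N x (fun j => centered_quartic a b c e x (j%:R / N%:R))
  <= a + c / N%:R + e / N%:R ^+ 2.
Proof.
move=> N_gt0 /andP[x_ge0 x_le1] c_ge0 e_ge0.
have N_ge1 : 1 <= N%:R :> R by rewrite ler1n.
have N_neq0 : N%:R != 0 :> R by rewrite pnatr_eq0 -lt0n.
have -> : binom_expect N x (fun j => centered_quartic a b c e x (j%:R / N%:R))
    = a + b / N%:R * binom_cmoment N x 1 + c / N%:R ^+ 2 * binom_cmoment N x 2
      + e / N%:R ^+ 4 * binom_cmoment N x 4.
  rewrite /binom_cmoment -[a in RHS](binom_expect_cst N x) -!binom_expectZ -!binom_expectD.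
  by apply: eq_binom_expect => j _; rewrite /centered_quartic; field.
rewrite binom_cmoment1 binom_cmoment2 binom_cmoment4 mulr0 addr0.
set p := x * (1 - x).
have p_ge0 : 0 <= p by rewrite mulr_ge0 ?subr_ge0.
have p_le : p <= 1 / 4 by have := sqr_ge0 (2 * x - 1); rewrite /p; nra.
have N_pos : 0 < N%:R :> R by lra.
have -> : c / N%:R ^+ 2 * (N%:R * p) = c / N%:R * p by field.
have -> : e / N%:R ^+ 4 * (3 * N%:R ^+ 2 * p ^+ 2 + N%:R * p * (1 - 6 * p))
    = e / N%:R ^+ 2 * (3 * p ^+ 2 + p * (1 - 6 * p) / N%:R) by field.
rewrite -!addrA lerD2l; apply: lerD.
  by rewrite -[leRHS]mulr1 ler_wpM2l ?divr_ge0 //; lra.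
rewrite -[leRHS]mulr1 ler_wpM2l ?divr_ge0 ?exprn_ge0 //.
have : p * (1 - 6 * p) / N%:R <= p by rewrite ler_pdivrMr //; nra.
nra.
Qed.
End BinomialExpectation.

Section Bernstein2.
Variable R : realType.
Implicit Types (g : R * R -> R) (y z : R * R).

Lemma bernstein2E N1 N2 g z : bernstein2 N1 N2 g z =
  binom_expect N1 z.1 (fun j1 => binom_expect N2 z.2 (fun j2 => g (j1%:R / N1%:R, j2%:R / N2%:R))).
Proof.
apply: eq_bigr => j1 _; rewrite mulr_sumr; apply: eq_bigr => j2 _.
by rewrite /bernstein_basis; ring.
Qed.

Lemma eq_bernstein2 N1 N2 g1 g2 z : (forall y, g1 y = g2 y) ->
  bernstein2 N1 N2 g1 z = bernstein2 N1 N2 g2 z.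
Proof. by move=> eq_g; apply: eq_bigr => j1 _; apply: eq_bigr => j2 _; rewrite eq_g. Qed.

Lemma bernstein2D N1 N2 g1 g2 z :
  bernstein2 N1 N2 (fun y => g1 y + g2 y) z = bernstein2 N1 N2 g1 z + bernstein2 N1 N2 g2 z.
Proof.
rewrite !bernstein2E -binom_expectD; apply: eq_binom_expect => j1 _.
exact: binom_expectD.
Qed.

Lemma bernstein2Z N1 N2 c g z :
  bernstein2 N1 N2 (fun y => c * g y) z = c * bernstein2 N1 N2 g z.
Proof.
rewrite !bernstein2E -binom_expectZ; apply: eq_binom_expect => j1 _.
exact: binom_expectZ.
Qed.

Lemma bernstein2_cst N1 N2 c z : bernstein2 N1 N2 (fun _ => c) z = c.
Proof. by rewrite bernstein2E !binom_expect_cst. Qed.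

Lemma bernstein2_split N1 N2 f1 f2 z :
  bernstein2 N1 N2 (fun y => f1 y.1 + f2 y.2) z
  = binom_expect N1 z.1 (fun j => f1 (j%:R / N1%:R))
    + binom_expect N2 z.2 (fun j => f2 (j%:R / N2%:R)).
Proof.
rewrite bernstein2E -[X in _ = _ + X](binom_expect_cst N1 z.1) -binom_expectD.
by apply: eq_binom_expect => j1 _ /=; rewrite binom_expectD binom_expect_cst.
Qed.

Lemma natr_div_in01 N j : (j <= N)%N -> 0 <= (j%:R / N%:R : R) <= 1.
Proof.
case: N => [|N] le_jN; first by move: le_jN; rewrite leqn0 => /eqP ->; rewrite mul0r lexx ler01.
by rewrite divr_ge0 ?ler0n //= ler_pdivrMr ?ltr0Sn // mul1r ler_nat.
Qed.

Lemma ler_bernstein2 N1 N2 g1 g2 z : in_D z -> (forall y, in_D y -> g1 y <= g2 y) ->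
  bernstein2 N1 N2 g1 z <= bernstein2 N1 N2 g2 z.
Proof.
move=> [z1_01 z2_01] le_g; rewrite !bernstein2E.
apply: ler_binom_expect => // j1 le_j1; apply: ler_binom_expect => // j2 le_j2.
by apply: le_g; split; apply: natr_div_in01.
Qed.
End Bernstein2.

Section MarkovIterates.
Variables (R : realType) (T : Type) (D : T -> Prop).
Implicit Types (f g : T -> R) (c : R).

Record markov_operator (P : (T -> R) -> T -> R) : Prop := MarkovOperator {
  markov_ext f g : (forall y, f y = g y) -> forall z, P f z = P g z;
  markovD f g z : P (fun y => f y + g y) z = P f z + P g z;
  markovZ c f z : P (fun y => c * f y) z = c * P f z;
  markov_cst c z : P (fun _ => c) z = c;
  markov_mono f g : (forall y, D y -> f y <= g y) -> forall z, D z -> P f z <= P g z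
}.

Variable P : (T -> R) -> T -> R.
Hypothesis HP : markov_operator P.

Lemma eq_markov_iter k f g : (forall y, f y = g y) -> forall z, iter k P f z = iter k P g z.
Proof.
move=> eq_fg; elim: k => [|k IH] z /=; first exact: eq_fg.
exact: (markov_ext HP IH).
Qed.

Lemma markov_iterD k f g z : iter k P (fun y => f y + g y) z = iter k P f z + iter k P g z.
Proof.
elim: k z => [|k IH] z //=.
by rewrite -(markovD HP); apply: (markov_ext HP).
Qed.

Lemma markov_iterZ k c f z : iter k P (fun y => c * f y) z = c * iter k P f z.
Proof.
elim: k z => [|k IH] z //=.
by rewrite -(markovZ HP); apply: (markov_ext HP).
Qed.

Lemma markov_iter_cst k c z : iter k P (fun _ => c) z = c.
Proof.
elim: k z => [|k IH] z //=.
by rewrite -{2}(markov_cst HP c z); apply: (markov_ext HP).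
Qed.

Lemma ler_markov_iter k f g : (forall y, D y -> f y <= g y) ->
  forall z, D z -> iter k P f z <= iter k P g z.
Proof.
move=> le_fg; elim: k => [|k IH] z zD /=; first exact: le_fg.
exact: (markov_mono HP IH).
Qed.

Lemma markov_iter_drift_le f gamma : (forall z, D z -> P f z <= f z + gamma) ->
  forall k z, D z -> iter k P f z <= f z + k%:R * gamma.
Proof.
move=> drift; elim=> [|k IH] z zD; first by rewrite mul0r addr0.
rewrite iterSr; apply: le_trans (@ler_markov_iter k _ (fun y => f y + gamma) drift z zD) _.
by rewrite markov_iterD markov_iter_cst -natr1 mulrDl mul1r addrA lerD2r IH.
Qed.

Lemma markov_iter_drift2_le f g alpha beta gamma y :
  0 <= alpha -> 0 <= beta -> 0 <= gamma ->
  (forall z, D z -> P f z <= f z + gamma) ->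
  (forall z, D z -> P g z <= g z + alpha * f z + beta) ->
  D y -> f y = 0 -> g y = 0 ->
  forall k, iter k P g y <= (alpha * gamma + beta) * k%:R ^+ 2.
Proof.
move=> alpha_ge0 beta_ge0 gamma_ge0 drift_f drift_g yD fy0 gy0; elim=> [|k IH].
  by rewrite /= gy0 expr0n mulr0.
rewrite iterSr.
apply: le_trans (@ler_markov_iter k _ (fun z => g z + alpha * f z + beta) drift_g y yD) _.
rewrite !markov_iterD markov_iterZ markov_iter_cst.
have := ler_wpM2l alpha_ge0 (markov_iter_drift_le drift_f k yD).
have ag_ge0 := mulr_ge0 alpha_ge0 gamma_ge0.
have := mulr_ge0 ag_ge0 (ler0n R k); have := mulr_ge0 beta_ge0 (ler0n R k).
rewrite fy0 -natr1; nra.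
Qed.
End MarkovIterates.

Section SquaredDistance.
Variable R : realType.
Implicit Types (u y z : R * R).

Definition sqdist u y : R := (u.1 - y.1) ^+ 2 + (u.2 - y.2) ^+ 2.

Lemma sqdist_ge0 u y : 0 <= sqdist u y.
Proof. by rewrite addr_ge0 ?sqr_ge0. Qed.

Lemma sqdistxx y : sqdist y y = 0.
Proof. by rewrite /sqdist !subrr expr0n addr0. Qed.

Lemma eucl_sub4 u y : eucl (u.1 - y.1, u.2 - y.2) ^+ 4 = sqdist u y ^+ 2.
Proof. by rewrite /eucl (_ : 4 = 2 * 2)%N // exprM sqr_sqrtr ?sqdist_ge0. Qed.

Lemma sqdist_sqr_le u y z : sqdist u y ^+ 2 <= sqdist z y ^+ 2
  + 4 * sqdist z y * ((z.1 - y.1) * (u.1 - z.1) + (z.2 - y.2) * (u.2 - z.2))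
  + 8 * sqdist z y * sqdist u z + 6 * ((u.1 - z.1) ^+ 4 + (u.2 - z.2) ^+ 4).
Proof.
rewrite /sqdist.
set w1 := z.1 - y.1; set w2 := z.2 - y.2; set x1 := u.1 - z.1; set x2 := u.2 - z.2.
have -> : u.1 - y.1 = w1 + x1 by rewrite /w1 /x1; ring.
have -> : u.2 - y.2 = w2 + x2 by rewrite /w2 /x2; ring.
set W := w1 ^+ 2 + w2 ^+ 2; set t := w1 * x1 + w2 * x2; set v := x1 ^+ 2 + x2 ^+ 2.
have -> : (w1 + x1) ^+ 2 + (w2 + x2) ^+ 2 = W + 2 * t + v by rewrite /W /t /v; ring.
have cauchy_schwarz : t ^+ 2 <= W * v.
  by rewrite /t /W /v; have := sqr_ge0 (w1 * x2 - w2 * x1); nra.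
have v2_le : v ^+ 2 <= 2 * (x1 ^+ 4 + x2 ^+ 4).
  by rewrite /v; have := sqr_ge0 (x1 ^+ 2 - x2 ^+ 2); nra.
have := sqr_ge0 (t - v); nra.
Qed.

Lemma convex_comb_in01 (a b t : R) : 0 <= t <= 1 -> 0 <= a <= 1 -> 0 <= b <= 1 ->
  0 <= a - t * (a - b) <= 1.
Proof. by move=> /andP[? ?] /andP[? ?] /andP[? ?]; apply/andP; split; nra. Qed.

Lemma sqr_add_le (a b h : R) : -1 <= a <= 1 -> -1 <= b <= 1 -> 0 <= h <= 1 ->
  (a + h * b) ^+ 2 <= a ^+ 2 + 3 * h.
Proof.
move=> /andP[? ?] /andP[? ?] /andP[? ?].
have : a * b <= 1 by nra.
have : (h * b) ^+ 2 <= h.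
  have : b ^+ 2 <= 1 by nra.
  have : h ^+ 2 <= h by nra.
  rewrite exprMn; have := sqr_ge0 h; nra.
nra.
Qed.
End SquaredDistance.

Section BernsteinSquaredDistance.
Variables (R : realType) (N1 N2 : nat).
Hypotheses (N1_gt0 : (0 < N1)%N) (N2_gt0 : (0 < N2)%N).
Implicit Types (y z : R * R).

Lemma bernstein2_sqdist_le y z : in_D z ->
  bernstein2 N1 N2 (fun u => sqdist u y) z <= sqdist z y + (N1%:R^-1 + N2%:R^-1).
Proof.
move=> [z1_01 z2_01].
set w1 := z.1 - y.1; set w2 := z.2 - y.2.
rewrite (@eq_bernstein2 _ _ _ _
  (fun u => centered_quartic (w1 ^+ 2) (2 * w1) 1 0 z.1 u.1
          + centered_quartic (w2 ^+ 2) (2 * w2) 1 0 z.2 u.2)); last first.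
  by move=> u; rewrite /sqdist /centered_quartic /w1 /w2; ring.
rewrite bernstein2_split.
apply: le_trans (lerD (binom_expect_quartic_le _ _ N1_gt0 z1_01 ler01 (lexx 0))
                      (binom_expect_quartic_le _ _ N2_gt0 z2_01 ler01 (lexx 0))) _.
by rewrite /sqdist -/w1 -/w2 !mul0r !addr0 !div1r; lra.
Qed.

Lemma bernstein2_sqdist2_le y z : in_D z ->
  bernstein2 N1 N2 (fun u => sqdist u y ^+ 2) z <=
  sqdist z y ^+ 2 + 8 * (N1%:R^-1 + N2%:R^-1) * sqdist z y + 6 * (N1%:R^-2 + N2%:R^-2).
Proof.
move=> zD; have [z1_01 z2_01] := zD.
set W := sqdist z y; set w1 := z.1 - y.1; set w2 := z.2 - y.2.
have W_ge0 : 0 <= 8 * W by rewrite mulr_ge0 ?sqdist_ge0.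
apply: le_trans (@ler_bernstein2 _ N1 N2 _
  (fun u => centered_quartic (W ^+ 2) (4 * W * w1) (8 * W) 6 z.1 u.1
          + centered_quartic 0 (4 * W * w2) (8 * W) 6 z.2 u.2) _ zD _) _.
  by move=> u _; have := sqdist_sqr_le u y z; rewrite /centered_quartic /W /w1 /w2 /sqdist; lra.
rewrite bernstein2_split.
apply: le_trans (lerD (binom_expect_quartic_le _ _ N1_gt0 z1_01 W_ge0 _)
                      (binom_expect_quartic_le _ _ N2_gt0 z2_01 W_ge0 _)) _; lra.
Qed.
End BernsteinSquaredDistance.

Section ReproductionExchangeChain.
Variables (R : realType) (N1 N2 : nat) (kappa : R).
Hypotheses (N1_gt0 : (0 < N1)%N) (N2_gt0 : (0 < N2)%N) (N2_le_N1 : (N2 <= N1)%N).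
Hypotheses (h_ge0 : 0 <= kappa / N1%:R) (h_le1 : kappa / N1%:R <= 1).

Local Notation P := (transition N1 N2 kappa).
Local Notation A := (Amap N1 N2 kappa).
Local Notation h := (kappa / N1%:R).
Local Notation inv1 := (N1%:R^-1 + N2%:R^-1 : R).
Local Notation inv2 := (N1%:R^-2 + N2%:R^-2 : R).

Let d_in01 : 0 <= (N2%:R / N1%:R : R) <= 1. Proof. exact: natr_div_in01. Qed.

Lemma Amap_in_D y : in_D y -> in_D (A y).
Proof.
case: y => y1 y2 [/= y1_01 y2_01].
have /andP[d_ge0 d_le1] := d_in01.
have hd_01 : 0 <= h * (N2%:R / N1%:R) <= 1.
  by rewrite mulr_ge0 //=; have := ler_pM h_ge0 d_ge0 h_le1 d_le1; rewrite mulr1.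
rewrite /Amap /=; split.
  by rewrite -mulrBr mulrA convex_comb_in01.
by rewrite (_ : - y1 + y2 = y2 - y1) ?convex_comb_in01 ?h_ge0 //; ring.
Qed.

Lemma sqdist_Amap_le u y : in_D u -> in_D y -> sqdist (A u) y <= sqdist u y + 6 * h.
Proof.
case: u y => u1 u2 [y1 y2] [/= u1_01 u2_01] [/= y1_01 y2_01].
have /andP[d_ge0 d_le1] := d_in01.
have h_01 : 0 <= h <= 1 by rewrite h_ge0.
have diff_in : forall a b : R, 0 <= a <= 1 -> 0 <= b <= 1 -> -1 <= a - b <= 1.
  by move=> a b /andP[? ?] /andP[? ?]; apply/andP; split; lra.
have le1 : (u1 - y1 + h * (N2%:R / N1%:R * (u2 - u1))) ^+ 2 <= (u1 - y1) ^+ 2 + 3 * h.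
  apply: sqr_add_le h_01; rewrite ?diff_in //.
  by have /andP[? ?] := diff_in _ _ u2_01 u1_01; apply/andP; split; nra.
have le2 : (u2 - y2 + h * (u1 - u2)) ^+ 2 <= (u2 - y2) ^+ 2 + 3 * h.
  by apply: sqr_add_le h_01; rewrite diff_in.
rewrite /sqdist /Amap /=; have := lerD le1 le2.
by rewrite (_ : 6 * h = 3 * h + 3 * h); [lra | ring].
Qed.

Lemma transition_markov : markov_operator (@in_D R) P.
Proof.
split=> [f g eq_fg z | f g z | c f z | c z | f g le_fg z zD].
- by apply: eq_bernstein2 => y; rewrite eq_fg.
- exact: bernstein2D.
- exact: bernstein2Z.
- exact: bernstein2_cst.
- by apply: ler_bernstein2 => // y yD; apply/le_fg/Amap_in_D.
Qed.

Lemma transition_sqdist_le y : in_D y -> forall z, in_D z ->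
  P (fun u => sqdist u y) z <= sqdist z y + (6 * h + inv1).
Proof.
move=> yD z zD.
apply: le_trans (@ler_bernstein2 _ N1 N2 _ (fun u => sqdist u y + 6 * h) _ zD _) _.
  by move=> u uD; apply: sqdist_Amap_le.
rewrite bernstein2D bernstein2_cst.
have := bernstein2_sqdist_le N1_gt0 N2_gt0 y zD; lra.
Qed.

Lemma transition_sqdist2_le y : in_D y -> forall z, in_D z ->
  P (fun u => sqdist u y ^+ 2) z <=
  sqdist z y ^+ 2 + (12 * h + 8 * inv1) * sqdist z y + (36 * h ^+ 2 + 12 * h * inv1 + 6 * inv2).
Proof.
move=> yD z zD.
apply: le_trans (@ler_bernstein2 _ N1 N2 _
  (fun u => sqdist u y ^+ 2 + 12 * h * sqdist u y + 36 * h ^+ 2) _ zD _) _.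
  move=> u uD; have := sqdist_Amap_le uD yD.
  have := sqdist_ge0 (A u) y; have := sqdist_ge0 u y; nra.
rewrite !bernstein2D bernstein2Z bernstein2_cst.
have := bernstein2_sqdist_le N1_gt0 N2_gt0 y zD.
have := bernstein2_sqdist2_le N1_gt0 N2_gt0 y zD.
have : 0 <= 12 * h by rewrite mulr_ge0.
nra.
Qed.

Lemma transition_iter_sqdist2_le y k : in_D y ->
  iter k P (fun u => sqdist u y ^+ 2) y <=
  ((12 * h + 8 * inv1) * (6 * h + inv1) + (36 * h ^+ 2 + 12 * h * inv1 + 6 * inv2)) * k%:R ^+ 2.
Proof.
move=> yD.
have inv1_ge0 : 0 <= inv1 by rewrite addr_ge0 ?invr_ge0 ?ler0n.
have inv2_ge0 : 0 <= inv2 by rewrite addr_ge0 ?invr_ge0 ?exprn_ge0 ?ler0n.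
have h12_ge0 : 0 <= 12 * h := mulr_ge0 (ler0n R 12) h_ge0.
have alpha_ge0 : 0 <= 12 * h + 8 * inv1 := addr_ge0 h12_ge0 (mulr_ge0 (ler0n R 8) inv1_ge0).
have gamma_ge0 : 0 <= 6 * h + inv1 := addr_ge0 (mulr_ge0 (ler0n R 6) h_ge0) inv1_ge0.
have beta_ge0 : 0 <= 36 * h ^+ 2 + 12 * h * inv1 + 6 * inv2 :=
  addr_ge0 (addr_ge0 (mulr_ge0 (ler0n R 36) (sqr_ge0 h)) (mulr_ge0 h12_ge0 inv1_ge0))
    (mulr_ge0 (ler0n R 6) inv2_ge0).
apply: (markov_iter_drift2_le transition_markov alpha_ge0 beta_ge0 gamma_ge0
  (transition_sqdist_le yD) (transition_sqdist2_le yD) yD (sqdistxx y)).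
by rewrite sqdistxx expr0n.
Qed.
End ReproductionExchangeChain.

Theorem proposition3 (R : realType) (d kappa : R) :
  0 < d -> d <= 1 -> 0 < kappa ->
  exists C : R,
    forall (N1 N2 : nat), (0 < N1)%N ->
      N2%:R = d * N1%:R ->
      kappa / N1%:R <= 1 ->
      forall (x0 : R * R), in_D x0 ->
      forall (m n : nat), (m < n)%N ->
        fourth_moment_incr N1 N2 kappa m n x0
          <= C * ((n - m)%:R ^+ 2) / (N1%:R ^+ 2).
Proof.
move=> d_gt0 d_le1 kappa_gt0.
(* C = N1^2 (alpha gamma + beta) once N2 = d N1 is substituted. *)
exists ((12 * kappa + 8 * (1 + d^-1)) * (6 * kappa + (1 + d^-1))
        + (36 * kappa ^+ 2 + 12 * kappa * (1 + d^-1) + 6 * (1 + d^-2))).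
move=> N1 N2 N1_gt0 N2E h_le1 x0 x0D m n _.
have N1_pos : 0 < N1%:R :> R by rewrite ltr0n.
have N2_gt0 : (0 < N2)%N by rewrite -(ltr0n R) N2E mulr_gt0.
have N2_le_N1 : (N2 <= N1)%N.
  by rewrite -(ler_nat R) N2E; have := ler_wpM2r (ltW N1_pos) d_le1; rewrite mul1r.
have h_ge0 : 0 <= kappa / N1%:R by rewrite divr_ge0 ?ltW.
have HP := transition_markov N2_le_N1 h_ge0 h_le1.
rewrite /fourth_moment_incr /transition_iter.
apply: le_trans (@ler_markov_iter _ _ _ _ HP m _ (fun _ => _ * (n - m)%:R ^+ 2) _ _ x0D) _.
  move=> y yD; rewrite (@eq_markov_iter _ _ _ _ HP _ _ (fun u => sqdist u y ^+ 2)) => [|u].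
    exact: transition_iter_sqdist2_le.
  exact: eucl_sub4.
rewrite (markov_iter_cst HP) [leRHS]mulrAC ler_wpM2r ?sqr_ge0 // N2E le_eqVlt.
apply/orP; left; apply/eqP; field.
by rewrite !gt_eqF.
Qed.
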